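(* Let $(X,d,A)$ be a metric pair such that $A$ is not isolated, and let $p\in[1,\infty]$. Then no persistence diagram in $(D(X,A),W_p)$ has a compact neighborhood. Hence $(D(X,A),W_p)$ is not locally compact, and every compact subset of $(D(X,A),W_p)$ has empty interior.
   Context: A metric on $X$ is a map $d:X\times X\to[0,\infty]$ with $d(x,x)=0$, symmetry and the triangle inequality (infinite distances allowed, $d(x,y)=0$ need not imply $x=y$); a metric pair $(X,d,A)$ is such a space with a closed subset $A$. Write $d(x,A)=\inf_{a\in A}d(x,a)$ and $A^\delta=\{x:d(x,A)<\delta\}$. $A$ is isolated if there is $\delta>0$ with $A^\delta=A$. $D(X,A)$ is the set of finite formal sums $\sum_i x_i$ of points of $X\setminus A$ (repetitions allowed), whose elements are called persistence diagrams. A matching of $\hat\alpha=\sum_{i\in I}x_i$, $\hat\beta=\sum_{j\in J}y_j$ is a formal sum $\sum_{k\in K}(x_k,y_{\varphi(k)})+\sum_{i\in I\setminus K}(x_i,z_i)+\sum_{j\in J\setminus\varphi(K)}(w_j,y_j)$ with $K\subset I$, $\varphi$ injective, $z_i,w_j\in A$; its $p$-cost is the $\ell^p$ norm (sup norm if $p=\infty$) of the distances of paired points; $W_p$ is the infimum of $p$-costs. The topology is the metric topology of $W_p$. *)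

From mathcomp Require Import all_boot all_order all_algebra.
From mathcomp Require Import all_classical all_reals all_analysis.
Set Implicit Arguments. Unset Strict Implicit. Unset Printing Implicit Defensive.
Import Order.TTheory GRing.Theory Num.Theory.
Local Open Scope classical_set_scope.
Local Open Scope ring_scope.

Section PD.
Variables (R : realType) (X : Type).

Definition is_metric (d : X -> X -> \bar R) : Prop :=
  [/\ forall x y, (0 <= d x y)%E,
      forall x, d x x = 0%E,
      forall x y, d x y = d y x &
      forall x y z, (d x z <= d x y + d y z)%E].

Definition dist_set (d : X -> X -> \bar R) (A : set X) (x : X) : \bar R :=
  ereal_inf [set d x a | a in A].

Definition metric_closed (d : X -> X -> \bar R) (A : set X) : Prop :=
  forall x, (forall e : R, 0 < e -> exists2 a, A a & (d x a < e%:E)%E) -> A x.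

Definition thickening (d : X -> X -> \bar R) (A : set X) (delta : R) : set X :=
  [set x | (dist_set d A x < delta%:E)%E].

Definition pd_isolated (d : X -> X -> \bar R) (A : set X) : Prop :=
  exists2 delta : R, 0 < delta & thickening d A delta = A.

(* A persistence diagram: a finite formal sum of points of X \ A
   (a finite family, repetitions allowed, indexed by 'I_n). *)
Record diagram (A : set X) := Diagram {
  dsize : nat;
  dpt : 'I_dsize -> X;
  dpt_off : forall i, ~ A (dpt i) }.
Arguments dpt {A} d _.

(* A matching of a = sum_i x_i and b = sum_j y_j: a partial injection
   phi : I -> option J (K = {i | phi i <> None}), points z_i in A for
   unmatched i, and points w_j in A for unmatched j. *)
Record matching (A : set X) (a b : diagram A) := Matching {
  mphi : 'I_(dsize a) -> option 'I_(dsize b);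
  mphi_inj : forall i i' j, mphi i = Some j -> mphi i' = Some j -> i = i';
  mz : 'I_(dsize a) -> X;
  mz_in : forall i, A (mz i);
  mw : 'I_(dsize b) -> X;
  mw_in : forall j, A (mw j) }.
Arguments mphi {A a b} m _.
Arguments mz {A a b} m _.
Arguments mw {A a b} m _.

Definition matched_dists (d : X -> X -> \bar R) (A : set X) (a b : diagram A)
    (m : matching a b) : seq (\bar R) :=
  [seq d (dpt a i) (match mphi m i with Some j => dpt b j | None => mz m i end)
     | i <- enum 'I_(dsize a)] ++
  [seq d (mw m j) (dpt b j)
     | j <- enum 'I_(dsize b) & [forall i, mphi m i != Some j]].

Definition lp_norm (p : \bar R) (l : seq (\bar R)) : \bar R :=
  match p with
  | EFin r => ((\sum_(c <- l) (c `^ r)) `^ (r^-1))%E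
  | _ => \big[maxe/0%E]_(c <- l) c
  end.

Definition pcost (d : X -> X -> \bar R) (p : \bar R) (A : set X)
    (a b : diagram A) (m : matching a b) : \bar R :=
  lp_norm p (matched_dists d m).

Definition Wp (d : X -> X -> \bar R) (p : \bar R) (A : set X)
    (a b : diagram A) : \bar R :=
  ereal_inf [set pcost d p m | m in [set: matching a b]].

Definition Wball (d : X -> X -> \bar R) (p : \bar R) (A : set X)
    (a : diagram A) (e : R) : set (diagram A) :=
  [set b | (Wp d p a b < e%:E)%E].

Definition Wopen (d : X -> X -> \bar R) (p : \bar R) (A : set X)
    (U : set (diagram A)) : Prop :=
  forall a, U a -> exists2 e : R, 0 < e & Wball d p a e `<=` U.

Definition Wnbhd (d : X -> X -> \bar R) (p : \bar R) (A : set X)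
    (a : diagram A) (N : set (diagram A)) : Prop :=
  exists2 U, Wopen d p U & U a /\ U `<=` N.

Definition Wcompact (d : X -> X -> \bar R) (p : \bar R) (A : set X)
    (K : set (diagram A)) : Prop :=
  forall (I : Type) (U : I -> set (diagram A)),
    (forall i, Wopen d p (U i)) -> K `<=` \bigcup_i U i ->
    exists2 F : set I, finite_set F & K `<=` \bigcup_(i in F) U i.

Definition Wlocally_compact (d : X -> X -> \bar R) (p : \bar R) (A : set X)
  : Prop :=
  forall a : diagram A, exists2 N, Wnbhd d p a N & Wcompact d p N.

Definition Winterior (d : X -> X -> \bar R) (p : \bar R) (A : set X)
    (K : set (diagram A)) : set (diagram A) :=
  [set a | Wnbhd d p a K].

End PD.

(* Since A is closed but not isolated, there are points y off A at arbitrarily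
   small distance t > 0 from A.  Adding k copies of y to a diagram a costs at
   most ((2 |a| + k) (2 t)^p)^(1/p) in W_p (keep a in place, send the copies to
   a point of A), so taking k_n -> oo with k_n t_n^p small, the diagrams
   a + k_n y_n all lie in a given ball around a.  They escape every finite
   subfamily of the open cover V_j = {b | for some th, sg < 1 and all n >= j,
   b has at most sg k_n points farther than th t_n from A}: V_j is open because
   a matching of small p-cost moves only few points by a lot, the V_j cover
   every diagram since diagrams are finite, and a + k_n y_n lies in no V_j with
   j <= n. *)

From mathcomp Require Import all_boot all_order all_algebra.
From mathcomp Require Import all_classical all_reals all_analysis.
From mathcomp Require Import lra.
Set Implicit Arguments. Unset Strict Implicit. Unset Printing Implicit Defensive.
Import Order.TTheory GRing.Theory Num.Theory.
Local Open Scope classical_set_scope.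
Local Open Scope ring_scope.

(* The diagram argument of [dpt] cannot be inferred from the index alone. *)
Arguments dpt {X A} d i.

Lemma leq_card_Some_preimage (T1 T2 : finType) (f : T1 -> option T2)
    (P : {set T2}) (Q : {set T1}) :
  (forall j, j \in P -> exists2 i, i \in Q & f i = Some j) -> (#|P| <= #|Q|)%N.
Proof.
move=> preim; rewrite -(card_imset _ (@Some_inj _)).
apply: leq_trans (leq_imset_card f Q); apply: subset_leq_card.
apply/fintype.subsetP => _ /imsetP [j /preim [i iQ <-] ->].
exact: imset_f.
Qed.

Lemma count_enum (T : finType) (P : pred T) : count P (enum T) = #|[set x | P x]%SET|.
Proof. by rewrite cardsE cardE size_filter /enum_mem filter_predT. Qed.

Section PowR.
Variable R : realType.

Lemma powRVK (r x : R) : r != 0 -> 0 <= x -> (x `^ r^-1) `^ r = x.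
Proof. by move=> r0 x0; rewrite -powRrM mulVf // powRr1. Qed.

Lemma powRKV (r x : R) : r != 0 -> 0 <= x -> (x `^ r) `^ r^-1 = x.
Proof. by move=> r0 x0; rewrite -powRrM mulfV // powRr1. Qed.

Lemma ltr_powRV (r x e : R) : 0 < r -> 0 <= x -> 0 <= e ->
  (x `^ r^-1 < e) = (x < e `^ r).
Proof.
move=> r0 x0 e0; have rn0 : r != 0 by rewrite gt_eqF.
apply/idP/idP => lt_xe.
- rewrite -(powRVK rn0 x0); apply: gt0_ltr_powR => //; rewrite nnegrE ?powR_ge0 //.
- rewrite -(powRKV rn0 e0); apply: gt0_ltr_powR; rewrite ?invr_gt0 ?nnegrE ?powR_ge0 //.
Qed.

End PowR.

Section DistanceToA.
Variables (R : realType) (X : Type) (d : X -> X -> \bar R) (A : set X).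
Hypothesis hd : is_metric d.
Local Notation distA := (dist_set d A).

Lemma metric_ge0 x y : (0 <= d x y)%E. Proof. by case: hd. Qed.
Lemma metric_xx x : d x x = 0%E. Proof. by case: hd. Qed.
Lemma metric_sym x y : d x y = d y x. Proof. by case: hd. Qed.
Lemma metric_triangle x y z : (d x z <= d x y + d y z)%E. Proof. by case: hd. Qed.

Lemma dist_set_ge0 x : (0 <= distA x)%E.
Proof. by apply/ereal_infP => _ [a _ <-]; apply: metric_ge0. Qed.

Lemma dist_set_le x a : A a -> (distA x <= d x a)%E.
Proof. by move=> Aa; apply: ge_ereal_inf; exists (d x a) => //; exists a. Qed.

Lemma dist_set_triangle x y : (distA x <= d x y + distA y)%E.
Proof.
case E: (d x y) (metric_ge0 x y) => [c||] // _.
  rewrite addeC -leeBlDr //; apply/ereal_infP => _ [a Aa <-].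
  rewrite leeBlDr // addeC -E; apply: le_trans (dist_set_le x Aa) _.
  exact: metric_triangle.
by rewrite addye ?leey // gt_eqF // (lt_le_trans _ (dist_set_ge0 y)).
Qed.

Definition far_count (b : diagram A) (s : R) : nat :=
  #|[set i | (s%:E < distA (dpt b i))%E]%SET|.

Definition partner_dist (a b : diagram A) (m : matching a b) (i : 'I_(dsize a)) :=
  d (dpt a i) (match mphi m i with Some j => dpt b j | None => mz m i end).

Lemma count_matched_dists (a b : diagram A) (m : matching a b) (P : pred (\bar R)) :
  count P (matched_dists d m) =
  (#|[set i | P (partner_dist m i)]%SET| +
   #|[set j | [forall i, mphi m i != Some j] && P (d (mw m j) (dpt b j))]%SET|)%N.
Proof.
rewrite /matched_dists count_cat !count_map count_filter -!enumT !count_enum.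
by congr (_ + _)%N; apply: eq_card => j; rewrite !inE /= andbC.
Qed.

Lemma matched_dists_ge0 (a b : diagram A) (m : matching a b) x :
  x \in matched_dists d m -> (0 <= x)%E.
Proof. by rewrite mem_cat => /orP [] /mapP [? _ ->]; apply: metric_ge0. Qed.

(* A point of b farther than s + dl from A is either paired with a point of a
   farther than s from A, or it contributes a distance >= dl to the matching. *)
Lemma far_count_matching (a b : diagram A) (m : matching a b) (s dl : R) : 0 <= s ->
  (far_count b (s + dl) <= far_count a s + count (fun x => dl%:E <= x)%E (matched_dists d m))%N.
Proof.
move=> s0.
set far := [set j | ((s + dl)%:E < distA (dpt b j))%E]%SET.
set close := [set j | [exists i, (mphi m i == Some j) &&
                                  (d (dpt a i) (dpt b j) < dl%:E)%E]]%SET.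
rewrite /far_count -/far -(cardsID close far) count_matched_dists.
apply: leq_add.
  apply: (@leq_card_Some_preimage _ _ (mphi m)) => j.
  rewrite !inE => /andP [far_j /existsP [i /andP [/eqP mij dij]]].
  exists i => //; rewrite inE ltNge; apply/negP => near_i.
  have : (distA (dpt b j) < (dl + s)%:E)%E.
    apply: le_lt_trans (dist_set_triangle _ (dpt a i)) _.
    have fin_i : distA (dpt a i) \is a fin_num.
      by rewrite ge0_fin_numE ?dist_set_ge0 // (le_lt_trans near_i) ?ltry.
    by rewrite metric_sym EFinD lte_leD.
  by rewrite addrC => /(lt_trans far_j); rewrite ltxx.
set unmatched := [set j | [forall i, mphi m i != Some j] &&
                          (dl%:E <= d (mw m j) (dpt b j))%E]%SET.
set matched := [set j | [exists i, (mphi m i == Some j) &&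
                                   (dl%:E <= partner_dist m i)%E]]%SET.
have far_sub : far :\: close \subset matched :|: unmatched.
  apply/fintype.subsetP => j; rewrite !inE => /andP [not_close far_j].
  have [/existsP [i /eqP mij]|unm] := boolP [exists i, mphi m i == Some j].
    apply/orP; left; apply/existsP; exists i; rewrite mij eqxx /= /partner_dist mij.
    by rewrite leNgt; apply: contra not_close => dij; apply/existsP; exists i; rewrite mij eqxx.
  apply/orP; right; rewrite negb_exists in unm; rewrite unm /= metric_sym.
  apply: le_trans (dist_set_le _ (mw_in m j)); apply/ltW/(le_lt_trans _ far_j).
  by rewrite lee_fin lerDr.
apply: leq_trans (subset_leq_card far_sub) _; apply: leq_trans (leq_card_setU _ _) _.
rewrite leq_add2r; apply: (@leq_card_Some_preimage _ _ (mphi m)) => j.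
by rewrite !inE => /existsP [i /andP [/eqP mij dij]]; exists i; rewrite ?inE.
Qed.

End DistanceToA.

Section LpNorm.
Variable R : realType.
Implicit Types (l : seq (\bar R)) (r u : R).

Lemma count_ge_powR_le_sum r (dl : R) l : 0 < r -> 0 <= dl ->
  (forall x, x \in l -> 0 <= x)%E ->
  (((count (fun x => dl%:E <= x)%E l)%:R * dl `^ r)%:E <= \sum_(c <- l) c `^ r)%E.
Proof.
move=> r0 dl0; elim: l => [|x l IH] l_ge0; first by rewrite big_nil mul0r.
rewrite big_cons /= natrD mulrDl EFinD; apply: leeD; last first.
  by apply: IH => y ly; apply: l_ge0; rewrite inE ly orbT.
have [dlx|] := boolP (dl%:E <= x)%E; last by rewrite mul0r poweR_ge0.
rewrite mul1r -poweR_EFin; apply: gt0_ler_poweR; rewrite ?(ltW r0) //.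
  by rewrite in_itv /= lee_fin dl0 leey.
by rewrite in_itv /= leey andbT l_ge0 ?mem_head.
Qed.

Lemma lp_norm_lt_count r (eta dl : R) l : 0 < r -> 0 <= dl -> 0 < eta ->
  (forall x, x \in l -> 0 <= x)%E -> (lp_norm r%:E l < eta%:E)%E ->
  (count (fun x => dl%:E <= x)%E l)%:R * dl `^ r < eta `^ r.
Proof.
move=> r0 dl0 eta0 l_ge0.
have := count_ge_powR_le_sum r0 dl0 l_ge0.
have : (0 <= \sum_(c <- l) c `^ r)%E by apply: sume_ge0 => ? _; apply: poweR_ge0.
rewrite /lp_norm; case: (\sum_(c <- l) c `^ r)%E => [s| |] //= s0.
  rewrite !lee_fin lte_fin in s0 * => cnt_s s_lt.
  by apply: le_lt_trans cnt_s _; rewrite -ltr_powRV ?(ltW eta0).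
by rewrite invr_eq0 gt_eqF // ltNge leey.
Qed.

Lemma lp_norm_le_size r u l : 0 < r -> 0 <= u ->
  (forall x, x \in l -> 0 <= x <= u%:E)%E ->
  (lp_norm r%:E l <= (((size l)%:R * u `^ r) `^ r^-1)%:E)%E.
Proof.
move=> r0 u0 l_bd.
have sum_le : (\sum_(c <- l) c `^ r <= ((size l)%:R * u `^ r)%:E)%E.
  elim: l l_bd => [|x l IH] l_bd; first by rewrite big_nil mul0r.
  rewrite big_cons /= -addn1 natrD mulrDl EFinD addeC mul1r; apply: leeD.
    have /andP [x0 xu] := l_bd x (mem_head _ _).
    rewrite -poweR_EFin; apply: gt0_ler_poweR; rewrite ?(ltW r0) //.
      by rewrite in_itv /= x0 leey.
    by rewrite in_itv /= lee_fin u0 leey.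
  by apply: IH => y ly; apply: l_bd; rewrite inE ly orbT.
rewrite /lp_norm -poweR_EFin; apply: gt0_ler_poweR; rewrite ?invr_ge0 ?(ltW r0) //.
  by rewrite in_itv /= leey andbT sume_ge0 // => ? _; apply: poweR_ge0.
by rewrite in_itv /= leey lee_fin mulr_ge0 ?powR_ge0.
Qed.

Lemma lp_norm_oo_lt (eta : R) l :
  (lp_norm +oo%E l < eta%:E)%E -> forall x, x \in l -> (x < eta%:E)%E.
Proof.
elim: l => [|y l IH] //=; rewrite big_cons gt_max => /andP [y_lt l_lt] x.
by rewrite inE => /orP [/eqP ->|]; [exact: y_lt | exact: IH].
Qed.

Lemma lp_norm_oo_le (u : \bar R) l : (0 <= u)%E ->
  (forall x, x \in l -> x <= u)%E -> (lp_norm +oo%E l <= u)%E.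
Proof.
move=> u0; elim: l => [|y l IH] l_le /=; first by rewrite big_nil.
rewrite big_cons ge_max l_le ?mem_head //= IH // => x lx; apply: l_le.
by rewrite inE lx orbT.
Qed.

Definition few_long_dists (p : \bar R) (t : nat -> R) (k : nat -> nat) :=
  forall rho gam : R, 0 < rho -> 0 < gam -> exists2 eta : R, 0 < eta &
    forall n l, (forall x, x \in l -> 0 <= x)%E -> (lp_norm p l < eta%:E)%E ->
    (count (fun x => (rho * t n)%:E <= x)%E l)%:R <= gam * (k n)%:R.

Lemma few_long_dists_oo (t : R) (k : nat -> nat) : 0 < t ->
  few_long_dists +oo%E (fun=> t) k.
Proof.
move=> t0 rho gam rho0 gam0; exists (rho * t); first exact: mulr_gt0.
move=> n l _ l_small; rewrite (@eq_in_count _ _ pred0) ?count_pred0 ?mul0r ?mulr_ge0 ?(ltW gam0) //.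
by move=> x lx; rewrite /= leNgt (lp_norm_oo_lt l_small lx).
Qed.

Lemma few_long_dists_lp r (kap : R) (t : nat -> R) (k : nat -> nat) :
  0 < r -> 0 < kap -> (forall n, 0 < t n) -> (forall n, kap < (k n)%:R * t n `^ r) ->
  few_long_dists r%:E t k.
Proof.
move=> r0 kap0 t_gt0 k_large rho gam rho0 gam0.
have gk0 : 0 < gam * kap by apply: mulr_gt0.
have eta0 : 0 < rho * (gam * kap) `^ r^-1 by rewrite mulr_gt0 ?powR_gt0.
exists (rho * (gam * kap) `^ r^-1) => // n l l_ge0 l_small; have tn0 := t_gt0 n.
have := lp_norm_lt_count r0 (mulr_ge0 (ltW rho0) (ltW tn0)) eta0 l_ge0 l_small.
rewrite (powRM r (ltW rho0) (ltW tn0)) (powRM r (ltW rho0) (powR_ge0 _ _)).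
rewrite powRVK ?gt_eqF ?(ltW gk0) //.
rewrite mulrCA ltr_pM2l ?powR_gt0 // => count_small.
rewrite -(ler_pM2r (powR_gt0 r tn0)) -mulrA; apply/ltW/(lt_trans count_small).
by rewrite ltr_pM2l.
Qed.

End LpNorm.

Lemma Wp_le_pcost (R : realType) (X : Type) (d : X -> X -> \bar R) (p : \bar R)
    (A : set X) (a b : diagram A) (m : matching a b) :
  (Wp d p a b <= pcost d p m)%E.
Proof. by apply: ge_ereal_inf; exists (pcost d p m) => //; exists m. Qed.

Section Pileup.
Variables (R : realType) (X : Type) (d : X -> X -> \bar R) (A : set X).
Hypothesis hd : is_metric d.
Variables (p : \bar R) (t : nat -> R) (k : nat -> nat).
Hypothesis t_gt0 : forall n, 0 < t n.
Hypothesis k_gt : forall n, (n < k n)%N.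
Hypothesis few_long : few_long_dists p t k.

Definition sparse_from (j : nat) : set (diagram A) := [set b | exists th sg : R,
  [/\ 0 < th, th < 1, sg < 1 &
      forall n, (j <= n)%N -> (far_count d b (th * t n))%:R <= sg * (k n)%:R]].

Lemma sparse_from_open j : Wopen d p (sparse_from j).
Proof.
move=> b [th [sg [th0 th1 sg1 b_sparse]]].
have rho0 : 0 < (1 - th) / 2 by lra.
have gam0 : 0 < (1 - sg) / 2 by lra.
have [eta eta0 few] := few_long rho0 gam0.
exists eta => // b' /ereal_inf_lt [_ [m _ <-] cost_m].
exists ((1 + th) / 2), ((1 + sg) / 2); split; try lra.
move=> n jn; have tn0 := t_gt0 n.
have := far_count_matching hd m ((1 - th) / 2 * t n) (mulr_ge0 (ltW th0) (ltW tn0)).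
rewrite -mulrDl (_ : th + (1 - th) / 2 = (1 + th) / 2); last by lra.
rewrite -(ler_nat R) natrD => /le_trans; apply.
have := b_sparse n jn; have := few n _ (@matched_dists_ge0 _ _ _ _ hd _ _ m) cost_m.
lra.
Qed.

Lemma sparse_from_cover : [set: diagram A] `<=` \bigcup_j sparse_from j.
Proof.
move=> b _; exists (2 * dsize b)%N => //; exists 2^-1, 2^-1; split; try lra.
move=> n jn.
have : (far_count d b (2^-1 * t n) <= dsize b)%N.
  by apply: leq_trans (max_card _) _; rewrite card_ord.
have : (2 * dsize b <= k n)%N by apply: leq_trans jn (ltnW (k_gt n)).
rewrite -!(ler_nat R) natrM; lra.
Qed.

Lemma pileup_notin_sparse_from (c : diagram A) n j : (j <= n)%N ->
  (k n <= #|[set i | ((t n)%:E <= dist_set d A (dpt c i))%E]%SET|)%N ->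
  ~ sparse_from j c.
Proof.
move=> jn c_pile [th [sg [th0 th1 sg1 c_sparse]]].
have : (k n <= far_count d c (th * t n))%N.
  apply: leq_trans c_pile (subset_leq_card _); apply/fintype.subsetP => i.
  by rewrite !inE; apply: lt_le_trans; rewrite lte_fin gtr_pMl.
rewrite -(ler_nat R) => /le_trans/(_ (c_sparse n jn)).
have : 0 < (k n)%:R :> R by rewrite ltr0n (leq_ltn_trans _ (k_gt n)).
nra.
Qed.

Lemma pileup_not_Wcompact (N : set (diagram A)) (c : nat -> diagram A) :
  (forall n, N (c n)) ->
  (forall n, k n <= #|[set i | ((t n)%:E <= dist_set d A (dpt (c n) i))%E]%SET|)%N ->
  ~ Wcompact d p N.
Proof.
move=> Nc c_pile /(_ _ _ sparse_from_open (subset_trans (@subsetT _ N) sparse_from_cover)).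
move=> [F /finite_seqP [s ->] cover].
have [j sj c_sparse] := cover _ (Nc (\max_(i <- s) i)%N).
by apply: pileup_notin_sparse_from (c_pile _) c_sparse; apply: leq_bigmax_seq.
Qed.

End Pileup.

Section AddCopies.
Variables (X : Type) (A : set X) (a : diagram A) (y : X) (k : nat).
Hypothesis y_off : ~ A y.

Definition add_copies_pt (i : 'I_(dsize a + k)) : X :=
  if fintype.split i is inl i' then dpt a i' else y.

Lemma add_copies_pt_off i : ~ A (add_copies_pt i).
Proof. by rewrite /add_copies_pt; case: (fintype.split i) => // i'; apply: dpt_off. Qed.

Definition add_copies : diagram A := Diagram add_copies_pt_off.

Lemma lshift_Some_inj (i i' : 'I_(dsize a)) (j : 'I_(dsize a + k)) :
  Some (lshift k i) = Some j -> Some (lshift k i') = Some j -> i = i'.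
Proof. by move=> [<-] [] /val_inj. Qed.

Variables (w : X) (w_in : A w).

Definition add_copies_matching : matching a add_copies :=
  @Matching _ _ a add_copies (fun i => Some (lshift k i)) lshift_Some_inj
    (fun=> w) (fun=> w_in) (fun=> w) (fun=> w_in).

End AddCopies.

Section AddCopiesCost.
Variables (R : realType) (X : Type) (d : X -> X -> \bar R) (A : set X).
Hypothesis hd : is_metric d.
Variables (a : diagram A) (y : X) (k : nat) (y_off : ~ A y).
Local Notation b := (add_copies a k y_off).

Lemma add_copies_far (s : R) : (s%:E <= dist_set d A y)%E ->
  (k <= #|[set i | (s%:E <= dist_set d A (dpt b i))%E]%SET|)%N.
Proof.
move=> sy.
have card_new : #|[set rshift (dsize a) j | j in 'I_k]%SET| = k.
  by rewrite card_imset ?card_ord //; apply: rshift_inj.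
rewrite -{1}card_new; apply: subset_leq_card; apply/fintype.subsetP => _ /imsetP [j _ ->].
by rewrite inE /= /add_copies_pt (unsplitK (inr j)).
Qed.

Lemma add_copies_matching_dists (w : X) (w_in : A w) x :
  x \in matched_dists d (add_copies_matching a k y_off w_in) -> (0 <= x <= d y w)%E.
Proof.
move=> xm; rewrite (matched_dists_ge0 hd xm) /=.
move: xm; rewrite mem_cat => /orP [] /mapP [j].
  by move=> _ -> /=; rewrite /add_copies_pt (unsplitK (inl j)) (metric_xx hd) (metric_ge0 hd).
rewrite mem_filter => /andP [unmatched _] -> /=; rewrite /add_copies_pt.
case E: (fintype.split j) => [j'|j']; last by rewrite (metric_sym hd).
move/forallP: unmatched => /(_ j') /=.
by have := splitK j; rewrite E /= => ->; rewrite eqxx.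
Qed.

Lemma size_add_copies_matching_dists (w : X) (w_in : A w) :
  (size (matched_dists d (add_copies_matching a k y_off w_in)) <= 2 * dsize a + k)%N.
Proof.
rewrite /matched_dists size_cat !size_map -!enumT !size_enum_ord size_filter.
rewrite mul2n -addnn -addnA leq_add2l.
by apply: leq_trans (count_size _ _) _; rewrite size_enum_ord.
Qed.

Lemma Wp_add_copies_oo (u : \bar R) : (dist_set d A y < u)%E -> (Wp d +oo%E a b < u)%E.
Proof.
move=> /ereal_inf_lt [_ [w w_in <-] yw].
apply: le_lt_trans yw; apply: le_trans (Wp_le_pcost _ _ (add_copies_matching a k y_off w_in)) _.
apply: lp_norm_oo_le (metric_ge0 hd y w) _.
by move=> x /add_copies_matching_dists /andP [].
Qed.

Lemma Wp_add_copies_lp (r u : R) : 0 < r -> (dist_set d A y < u%:E)%E ->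
  (Wp d r%:E a b <= (((2 * dsize a + k)%:R * u `^ r) `^ r^-1)%:E)%E.
Proof.
move=> r0 /ereal_inf_lt [_ [w w_in <-] /ltW yw].
have u0 : 0 <= u by rewrite -lee_fin (le_trans (metric_ge0 hd y w)).
apply: le_trans (Wp_le_pcost _ _ (add_copies_matching a k y_off w_in)) _.
apply: le_trans (lp_norm_le_size r0 u0 _) _.
  by move=> x /add_copies_matching_dists /andP [-> /le_trans ->].
rewrite lee_fin ge0_ler_powR ?invr_ge0 ?(ltW r0) ?nnegrE ?mulr_ge0 ?powR_ge0 //.
by rewrite ler_wpM2r ?powR_ge0 // ler_nat size_add_copies_matching_dists.
Qed.

Lemma Wp_add_copies_lt_lp (r e t : R) : 0 < r -> 0 <= e ->
  dist_set d A y = t%:E -> 0 < t -> (2 * dsize a + k)%:R * (2 * t) `^ r < e `^ r ->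
  (Wp d r%:E a b < e%:E)%E.
Proof.
move=> r0 e0 yt t0 cost_lt; have near_y : (dist_set d A y < (2 * t)%:E)%E.
  by rewrite yt lte_fin ltr_pMl ?ltr1n.
apply: le_lt_trans (Wp_add_copies_lp r0 near_y) _.
by rewrite lte_fin ltr_powRV ?mulr_ge0 ?powR_ge0.
Qed.

End AddCopiesCost.

Lemma exists_nat_mul_between (R : archiRealFieldType) (kap T : R) : 0 <= kap -> 0 < T ->
  exists k : nat, kap < k%:R * T /\ k%:R * T <= kap + T.
Proof.
move=> kap0 T0; exists (Num.Def.truncn (kap / T)).+1.
have /andP [lo hi] := truncn_itv (divr_ge0 kap0 (ltW T0)).
by split; [rewrite -ltr_pdivrMr | rewrite -natr1 mulrDl mul1r lerD2r -ler_pdivlMr].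
Qed.

Section NotLocallyCompact.
Variables (R : realType) (X : Type) (d : X -> X -> \bar R) (A : set X).
Hypotheses (hd : is_metric d) (A_closed : metric_closed d A)
  (A_not_isolated : ~ pd_isolated d A).
Local Notation distA := (dist_set d A).

Lemma exists_point_near (dl : R) : 0 < dl ->
  exists y : X, exists t : R, [/\ ~ A y, distA y = t%:E, 0 < t & t < dl].
Proof.
move=> dl0.
have [y [y_near y_off]] : exists y, thickening d A dl y /\ ~ A y.
  apply: contrapT => none; apply: A_not_isolated; exists dl => //.
  apply/seteqP; split => x x_near; first by apply: contrapT => x_off; apply: none; exists x.
  by rewrite /thickening /= (le_lt_trans (dist_set_le d x x_near)) // (metric_xx hd) lte_fin.
move: y_near; rewrite /thickening /=.
case E: (distA y) (dist_set_ge0 A hd y) => [t||] //; rewrite lee_fin lte_fin => t0 t_dl.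
exists y, t; split => //; rewrite lt_neqAle t0 andbT; apply/negP => /eqP t_eq0.
apply: y_off; apply: A_closed => e e0.
have /ereal_inf_lt [_ [a Aa <-] ya] : (distA y < e%:E)%E by rewrite E -t_eq0 lte_fin.
by exists a.
Qed.

Lemma exists_point_near_powR (r b : R) : 0 < r -> 0 < b ->
  exists y : X, exists t : R, [/\ ~ A y, distA y = t%:E, 0 < t & t `^ r < b].
Proof.
move=> r0 b0; have [|y [t [y_off yt t0 t_lt]]] := @exists_point_near (b `^ r^-1).
  exact: powR_gt0.
exists y, t; split => //; rewrite -(powRVK (lt0r_neq0 r0) (ltW b0)).
by apply: gt0_ltr_powR; rewrite ?nnegrE ?(ltW t0) ?powR_ge0.
Qed.

Lemma ball_not_Wcompact_oo (a : diagram A) (e : R) (N : set (diagram A)) :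
  0 < e -> Wball d +oo%E a e `<=` N -> ~ Wcompact d +oo%E N.
Proof.
move=> e0 ball_N; have [y [t [y_off yt t0 te]]] := exists_point_near e0.
apply: (@pileup_not_Wcompact _ _ d A hd _ (fun=> t) S _ _ (few_long_dists_oo _ t0) N
  (fun n => add_copies a n.+1 y_off)) => // n.
- by apply: ball_N; apply: (Wp_add_copies_oo hd); rewrite yt lte_fin.
- by apply: add_copies_far; rewrite yt.
Qed.

Lemma ball_not_Wcompact_lp (r : R) (a : diagram A) (e : R) (N : set (diagram A)) :
  0 < r -> 0 < e -> Wball d r%:E a e `<=` N -> ~ Wcompact d r%:E N.
Proof.
move=> r0 e0 ball_N.
(* chosen so that (2 |a| + k_n) (2 t_n)^r < 2^r * 2 kap = e^r below *)
pose kap := e `^ r / (2 * 2 `^ r).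
have kap0 : 0 < kap by rewrite divr_gt0 ?mulr_gt0 ?powR_gt0.
have near_pt n : exists yt : X * R, [/\ ~ A yt.1, distA yt.1 = yt.2%:E, 0 < yt.2 &
    (2 * dsize a + n + 1)%:R * yt.2 `^ r < kap].
  have pos : 0 < (2 * dsize a + n + 1)%:R :> R by rewrite ltr0n addn1.
  have [y [t [y_off yt t0 t_lt]]] := exists_point_near_powR r0 (divr_gt0 kap0 pos).
  by exists (y, t); split => //=; rewrite mulrC -ltr_pdivlMr.
have [yt /all_and4 [y_off yt_dist t_gt0 t_small]] := choice near_pt.
pose t n := (yt n).2; pose T n := t n `^ r.
have T_gt0 n : 0 < T n by apply: powR_gt0 (t_gt0 n).
have [k /all_and2 [k_large k_bounded]] :=
  choice (fun n => exists_nat_mul_between (ltW kap0) (T_gt0 n)).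
apply: (@pileup_not_Wcompact _ _ d A hd _ t k t_gt0 _ (few_long_dists_lp r0 kap0 t_gt0 k_large)
  N (fun n => add_copies a (k n) (y_off n))) => n.
- rewrite -(ltr_nat R) -(ltr_pM2r (T_gt0 n)); apply: le_lt_trans (k_large n).
  apply/ltW/(le_lt_trans _ (t_small n)); rewrite ler_pM2r // ler_nat.
  exact: leq_trans (leq_addl _ _) (leq_addr _ _).
- apply: ball_N.
  apply: (Wp_add_copies_lt_lp hd (y_off n) r0 (ltW e0) (yt_dist n) (t_gt0 n)).
  rewrite powRM ?(ltW (t_gt0 n)) // -/(T n) natrD.
  have : (2 * dsize a + 1)%:R * T n < kap.
    apply: le_lt_trans (t_small n); rewrite ler_pM2r // ler_nat -addnA leq_add2l.
    by rewrite leq_addl.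
  have e_kap : e `^ r = 2 * 2 `^ r * kap by rewrite mulrC divfK ?mulf_neq0 ?powR_gt0 ?gt_eqF.
  rewrite e_kap natrD natrM; have := k_bounded n; have := T_gt0 n.
  have := powR_gt0 r (@ltr0Sn R 1); nra.
- by apply: add_copies_far; rewrite yt_dist.
Qed.

Lemma nbhd_not_Wcompact (p : \bar R) (a : diagram A) (N : set (diagram A)) :
  (0 < p)%E -> Wnbhd d p a N -> ~ Wcompact d p N.
Proof.
move=> p0 [U U_open [Ua UN]]; have [e e0 ball_U] := U_open a Ua.
have {U U_open Ua UN ball_U} ball_N : Wball d p a e `<=` N by move=> b /ball_U /UN.
case: p p0 ball_N => [r||] //; rewrite ?lte_fin => r0 ball_N.
- exact: ball_not_Wcompact_lp r0 e0 ball_N.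
- exact: ball_not_Wcompact_oo e0 ball_N.
Qed.

End NotLocallyCompact.

Theorem theorem7p10 (R : realType) (X : Type) (d : X -> X -> \bar R)
    (A : set X) (p : \bar R) :
  is_metric d -> metric_closed d A -> ~ pd_isolated d A -> (1 <= p)%E ->
  [/\ forall (a : diagram A) (N : set (diagram A)),
        Wnbhd d p a N -> ~ Wcompact d p N,
      ~ Wlocally_compact d p A &
      forall K : set (diagram A), Wcompact d p K -> Winterior d p K = set0].
Proof.
move=> hd A_closed A_not_isolated p1.
have p0 : (0 < p)%E by apply: lt_le_trans p1; rewrite lte_fin.
have no_compact_nbhd := nbhd_not_Wcompact hd A_closed A_not_isolated p0.
split => // [loc_compact | K K_compact].
- have [y [t [y_off _ _ _]]] := exists_point_near hd A_closed A_not_isolated ltr01.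
  have [N N_nbhd N_compact] := loc_compact (@Diagram _ A 1 (fun=> y) (fun=> y_off)).
  exact: no_compact_nbhd N_nbhd N_compact.
- by apply/seteqP; split => // a a_interior; apply: no_compact_nbhd a_interior K_compact.
Qed.
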